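(* Let $V$ be a crossed module and $M$ an abelian $\pi_0(V)$-module. Then $H^1(V,M)\cong H^1(\pi_0(V),M)$.
   Context: A crossed module $V$: group $G_V$, group $M_V$ with left $G_V$-action ${}^gm$, homomorphism $\mu:M_V\to G_V$ with $\mu({}^gm)=g\mu(m)g^{-1}$ and ${}^{\mu(n)}m=nmn^{-1}$; $\pi_0(V)=G_V/\mu(M_V)$, $\bar g$ the class of $g$. The cochain complex of $V$ with coefficients in $M$ begins $C^0=M$, $C^1=\mathrm{Map}(G_V,M)$, $C^2=\mathrm{Map}(M_V\times G_V\times G_V,M)$ with $(dc)(g)=c-\bar g\cdot c$ and $(dc)(m,h,g)=c(\mu(m)h)-c(hg)+\bar h\cdot c(g)$; $H^1(V,M)$ is its first cohomology. $H^1(\pi_0(V),M)$ is ordinary group cohomology. *)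

From HB Require Import structures.
From mathcomp Require Import all_boot all_order all_algebra.
Set Implicit Arguments. Unset Strict Implicit. Unset Printing Implicit Defensive.
Import GRing.Theory.

Definition is_crossed_module (GV MV : groupType)
    (act : GV -> MV -> MV) (mu : MV -> GV) : Prop :=
  [/\
      (forall m, act 1%g m = m),
      (forall g h m, act (g * h)%g m = act g (act h m)),
      (forall g m n, act g (m * n)%g = (act g m * act g n)%g),
      (forall m n, mu (m * n)%g = (mu m * mu n)%g) &
      (forall g m, mu (act g m) = (g * mu m * g^-1)%g) /\
      (forall n m, act (mu n) m = (n * m * n^-1)%g)].

(* Q together with p : GV -> Q is (a model of) the quotient group
   GV / mu(MV): p is a surjective homomorphism whose kernel is mu(MV).
   The class of g is p g. *)
Definition is_pi0 (GV MV Q : groupType) (mu : MV -> GV) (p : GV -> Q) : Prop :=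
  [/\ (forall g h, p (g * h)%g = (p g * p h)%g),
      (forall x : Q, exists g, p g = x) &
      (forall g, p g = 1%g <-> exists m, g = mu m)].

Definition is_module (Q : groupType) (M : zmodType) (a : Q -> M -> M) : Prop :=
  [/\ (forall x, a 1%g x = x),
      (forall q r x, a (q * r)%g x = a q (a r x)) &
      (forall q x y, a q (x + y)%R = (a q x + a q y)%R)].

Local Open Scope ring_scope.

Definition dV0 (GV Q : groupType) (M : zmodType) (p : GV -> Q)
    (a : Q -> M -> M) (c : M) : GV -> M :=
  fun g => c - a (p g) c.

Definition dV1 (GV MV Q : groupType) (M : zmodType) (mu : MV -> GV)
    (p : GV -> Q) (a : Q -> M -> M) (c : GV -> M) : MV -> GV -> GV -> M :=
  fun m h g => c (mu m * h)%g - c (h * g)%g + a (p h) (c g).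

Definition ZV1 (GV MV Q : groupType) (M : zmodType) (mu : MV -> GV)
    (p : GV -> Q) (a : Q -> M -> M) (c : GV -> M) : Prop :=
  forall m h g, dV1 mu p a c m h g = 0.

Definition BV1 (GV Q : groupType) (M : zmodType) (p : GV -> Q)
    (a : Q -> M -> M) (c : GV -> M) : Prop :=
  exists c0 : M, forall g, c g = dV0 p a c0 g.

Definition dQ0 (Q : groupType) (M : zmodType) (a : Q -> M -> M) (c : M)
  : Q -> M := fun x => a x c - c.

Definition dQ1 (Q : groupType) (M : zmodType) (a : Q -> M -> M) (f : Q -> M)
  : Q -> Q -> M := fun x y => a x (f y) - f (x * y)%g + f x.

Definition ZQ1 (Q : groupType) (M : zmodType) (a : Q -> M -> M) (f : Q -> M)
  : Prop := forall x y, dQ1 a f x y = 0.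

Definition BQ1 (Q : groupType) (M : zmodType) (a : Q -> M -> M) (f : Q -> M)
  : Prop := exists c0 : M, forall x, f x = dQ0 a c0 x.

(* Given subgroups B1 <= Z1 of Map(X,M) and B2 <= Z2 of Map(Y,N), an
   isomorphism of abelian groups Z1/B1 ~= Z2/B2 is the same as an additive
   map phi : Z1 -> Z2 inducing a bijection on the quotients, i.e. with
   phi^-1(B2) = B1 (injectivity) and Z2 = phi(Z1) + B2 (surjectivity). *)
Definition subquot_iso (X Y : Type) (M N : zmodType)
    (Z1 B1 : (X -> M) -> Prop) (Z2 B2 : (Y -> N) -> Prop) : Prop :=
  exists phi : (X -> M) -> (Y -> N),
  [/\ (forall c, Z1 c -> Z2 (phi c)),
      (forall c c', Z1 c -> Z1 c' ->
          phi (fun x => c x + c' x) = (fun y => phi c y + phi c' y)),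
      (forall c, Z1 c -> (B2 (phi c) <-> B1 c)) &
      (forall f, Z2 f -> exists2 c, Z1 c & B2 (fun y => f y - phi c y))].

From HB Require Import structures.
From mathcomp Require Import all_boot all_order all_algebra.
From Stdlib Require Import ClassicalEpsilon.
Set Implicit Arguments.
Unset Strict Implicit.
Unset Printing Implicit Defensive.
Import GRing.Theory.
Local Open Scope ring_scope.

(* Choosing m with mu(m) = 1, the cocycle condition on c : G_V -> M says that
   c is a crossed homomorphism c(hg) = c(h) + h.c(g); choosing g = 1 it says
   that c is invariant under left multiplication by mu(M_V).  Hence c is
   constant on the fibres of p : G_V -> pi_0(V) and descends, along a section
   of p, to a crossed homomorphism of pi_0(V); inflation along p is inverse to
   descent, and coboundaries correspond to coboundaries.  Only the exactness
   of M_V -> G_V -> pi_0(V) and the additivity of the action are used. *)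

Lemma subr_addr_eq0 (M : zmodType) (x y z : M) : x - y + z = 0 -> y = x + z.
Proof. by move=> H; apply/eqP; rewrite eq_sym -subr_eq0 addrAC H. Qed.

Section CrossedModuleH1.

Variables (GV MV Q : groupType) (mu : MV -> GV) (p : GV -> Q).
Variables (M : zmodType) (a : Q -> M -> M).

Hypothesis pM : forall g h, p (g * h)%g = (p g * p h)%g.
Hypothesis pker : forall g, p g = 1%g <-> exists m, g = mu m.
Hypothesis aD : forall q x y, a q (x + y) = a q x + a q y.

Variable s : Q -> GV.
Hypothesis sK : cancel s p.

Lemma p1 : p 1%g = 1%g.
Proof. by apply: (mulgI (p 1%g)); rewrite mulg1 -pM mulg1. Qed.

Lemma pmu m : p (mu m) = 1%g.
Proof. by apply/pker; exists m. Qed.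

Lemma act0 q : a q 0 = 0.
Proof. by apply: (addrI (a q 0)); rewrite -aD !addr0. Qed.

Lemma actN q x : a q (- x) = - a q x.
Proof. by apply: (addrI (a q x)); rewrite -aD !subrr act0. Qed.

Section Cocycle.

Variable c : GV -> M.
Hypothesis Zc : ZV1 mu p a c.

Lemma ZV1_crossed h g : c (h * g)%g = c h + a (p h) (c g).
Proof.
have [m0 m0E] : exists m, 1%g = mu m by apply/pker; rewrite p1.
by have := Zc m0 h g; rewrite /dV1 -m0E mul1g => /subr_addr_eq0.
Qed.

Lemma ZV1_mul_mu m h : c (mu m * h)%g = c h.
Proof.
have := Zc m h 1%g; rewrite /dV1 mulg1 => /subr_addr_eq0 E.
by apply: (addIr (a (p h) (c 1%g))); rewrite -E -ZV1_crossed mulg1.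
Qed.

Lemma ZV1_fibre g g' : p g = p g' -> c g = c g'.
Proof.
move=> E; have : p (g * g'^-1)%g = 1%g by rewrite pM E -pM mulgV p1.
by case/pker=> m mE; rewrite -(ZV1_mul_mu m g') -mE mulgVK.
Qed.

Lemma ZQ1_descend : ZQ1 a (c \o s).
Proof.
move=> x y; rewrite /dQ1 /=.
rewrite (@ZV1_fibre (s (x * y)%g) (s x * s y)%g); last by rewrite pM !sK.
by rewrite ZV1_crossed sK opprD addrA addrAC subrr add0r addNr.
Qed.

Lemma BQ1_descendE : BQ1 a (c \o s) <-> BV1 p a c.
Proof.
split=> -[c0 Hc0]; exists (- c0).
- move=> g; rewrite (@ZV1_fibre g (s (p g))) ?sK //.
  by rewrite [c _](Hc0 (p g)) /dQ0 /dV0 actN opprK addrC.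
- by move=> x; rewrite /dQ0 actN /= Hc0 /dV0 sK opprK addrC.
Qed.

End Cocycle.

Lemma ZV1_inflate f : ZQ1 a f -> ZV1 mu p a (f \o p).
Proof.
move=> Zf m h g; rewrite /dV1 /= !pM pmu mul1g.
have := Zf (p h) (p g); rewrite /dQ1 => /subr_addr_eq0 ->.
by rewrite opprD addrA addrAC subrr add0r addNr.
Qed.

End CrossedModuleH1.

Theorem corollary3p7 (GV MV : groupType) (act : GV -> MV -> MV) (mu : MV -> GV)
    (Q : groupType) (p : GV -> Q) (M : zmodType) (a : Q -> M -> M) :
  is_crossed_module act mu ->
  is_pi0 mu p ->
  is_module a ->
  subquot_iso (ZV1 mu p a) (BV1 p a) (ZQ1 a) (BQ1 a).
Proof.
move=> _ [pM psurj pker] [_ _ aD].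
have [s sK] : exists s : Q -> GV, cancel s p.
  by exists (fun x => proj1_sig (constructive_indefinite_description _ (psurj x)))
     => x; case: constructive_indefinite_description.
exists (fun c => c \o s); split=> //.
- by move=> c; apply: ZQ1_descend.
- by move=> c Zc; apply: BQ1_descendE.
- move=> f Zf; exists (f \o p); first exact: ZV1_inflate.
  by exists 0 => y; rewrite /= sK /dQ0 (act0 aD) !subrr.
Qed.
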